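(* For every $\gamma\in(0,\frac12)$ there is $c=c(\gamma)>0$ such that for every integer $k\ge3$ and every $1\le i\le k-1$, $$e_{i,k},\ p_{0\to1,i,k},\ p_{1\to0,i,k}\in[c,1-c].$$
   Context: $\|u\|$ denotes Hamming weight and $\mathbb{E}\mathrm{ven}_k=\{u\in\mathbb{F}_2^k:\|u\|\text{ even}\}$. For an integer $k\ge2$ and $\gamma\in(0,\frac12)$, $\alpha=\alpha(k,\gamma)$ is the unique $\alpha\in(0,1)$ with $\alpha\frac{(1+\alpha)^{k-1}-(1-\alpha)^{k-1}}{(1+\alpha)^k+(1-\alpha)^k}=\gamma$, and $P_{k,\gamma}$ is the distribution on $\mathbb{F}_2^k$ with $P_{k,\gamma}(u)=\alpha^{\|u\|}/Z$ for $u\in\mathbb{E}\mathrm{ven}_k$ and $0$ otherwise, where $Z=\frac{(1+\alpha)^k+(1-\alpha)^k}{2}$. Define $$p_{0\to1,i,k}=\alpha\frac{(1+\alpha)^{k-i}-(1-\alpha)^{k-i}}{(1+\alpha)^{k-i+1}+(1-\alpha)^{k-i+1}},\qquad p_{1\to0,i,k}=\alpha\frac{(1+\alpha)^{k-i}+(1-\alpha)^{k-i}}{(1+\alpha)^{k-i+1}-(1-\alpha)^{k-i+1}},$$ and $e_{i,k}=\Pr_{u\sim P_{k,\gamma}}\big(u_1+\dots+u_i\text{ is odd}\big)$. *)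

From Stdlib Require Import Reals List Arith.
Import ListNotations.
Open Scope R_scope.

(* All vectors of F_2^k, represented as boolean lists of length k;
   coordinate u_j (1-based) is the j-th element of the list. *)
Fixpoint bvecs (k : nat) : list (list bool) :=
  match k with
  | O => [ [] ]
  | S k' => map (cons false) (bvecs k') ++ map (cons true) (bvecs k')
  end.

Definition hw (u : list bool) : nat := length (filter (fun b : bool => b) u).

Definition rsum {A : Type} (f : A -> R) (l : list A) : R :=
  fold_right (fun x acc => f x + acc) 0 l.

Definition is_alpha (k : nat) (gamma alpha : R) : Prop :=
  0 < alpha < 1 /\
  alpha * ((1 + alpha) ^ (k - 1) - (1 - alpha) ^ (k - 1))
        / ((1 + alpha) ^ k + (1 - alpha) ^ k) = gamma.

Definition Zk (k : nat) (alpha : R) : R :=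
  ((1 + alpha) ^ k + (1 - alpha) ^ k) / 2.

(* P_{k,gamma}(u), written in terms of alpha = alpha(k,gamma) *)
Definition Pk (k : nat) (alpha : R) (u : list bool) : R :=
  if Nat.even (hw u) then alpha ^ (hw u) / Zk k alpha else 0.

Definition e_ik (k i : nat) (alpha : R) : R :=
  rsum (fun u => if Nat.odd (hw (firstn i u)) then Pk k alpha u else 0) (bvecs k).

Definition p01 (k i : nat) (alpha : R) : R :=
  alpha * ((1 + alpha) ^ (k - i) - (1 - alpha) ^ (k - i))
        / ((1 + alpha) ^ (k - i + 1) + (1 - alpha) ^ (k - i + 1)).

Definition p10 (k i : nat) (alpha : R) : R :=
  alpha * ((1 + alpha) ^ (k - i) + (1 - alpha) ^ (k - i))
        / ((1 + alpha) ^ (k - i + 1) - (1 - alpha) ^ (k - i + 1)).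

Definition in_c (c x : R) : Prop := c <= x <= 1 - c.

From Stdlib Require Import Reals List Lra Lia Psatz.
Import ListNotations.
Open Scope R_scope.

(* Write A = 1 + alpha, B = 1 - alpha and s = alpha / (1 + alpha).  Expanding the parity
   indicator with the signs (+-1)^(weight) gives
   e_{i,k} = (A^i - B^i) (A^(k-i) - B^(k-i)) / (2 (A^k + B^k)),
   so e, p01 and p10 are all ratios of the numbers A^n +- B^n.  As 0 < B < A and
   A - B = 2 alpha, we have 2 s A^n <= A^n - B^n <= A^n for n >= 1, which puts e and p01
   in [s^2, 1/2] and p10 in [s, 1/2].  Finally the equation defining alpha forces
   gamma <= s, so c = gamma^2 works uniformly in k and i. *)

Lemma rsum_nil {A} (f : A -> R) : rsum f [] = 0.
Proof. reflexivity. Qed.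

Lemma rsum_cons {A} (f : A -> R) x l : rsum f (x :: l) = f x + rsum f l.
Proof. reflexivity. Qed.

Lemma rsum_app {A} (f : A -> R) l1 l2 : rsum f (l1 ++ l2) = rsum f l1 + rsum f l2.
Proof.
  induction l1 as [|x l1 IH]; cbn [app].
  - rewrite rsum_nil; ring.
  - rewrite !rsum_cons, IH; ring.
Qed.

Lemma rsum_map {A B} (f : B -> R) (g : A -> B) l : rsum f (map g l) = rsum (fun x => f (g x)) l.
Proof. induction l as [|x l IH]; [reflexivity|]. cbn [map]. rewrite !rsum_cons, IH; reflexivity. Qed.

Lemma rsum_ext {A} (f g : A -> R) l : (forall x, f x = g x) -> rsum f l = rsum g l.
Proof. intros Hfg; induction l as [|x l IH]; [reflexivity|]. rewrite !rsum_cons, IH, Hfg; reflexivity. Qed.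

Lemma rsum_plus {A} (f g : A -> R) l : rsum (fun x => f x + g x) l = rsum f l + rsum g l.
Proof. induction l as [|x l IH]; [rewrite !rsum_nil; ring|]. rewrite !rsum_cons, IH; ring. Qed.

Lemma rsum_scal {A} (c : R) (f : A -> R) l : rsum (fun x => c * f x) l = c * rsum f l.
Proof. induction l as [|x l IH]; [rewrite !rsum_nil; ring|]. rewrite !rsum_cons, IH; ring. Qed.

Lemma hw_app u v : hw (u ++ v) = (hw u + hw v)%nat.
Proof. unfold hw. rewrite filter_app, length_app. reflexivity. Qed.

Lemma hw_cons b u : hw (b :: u) = ((if b then 1 else 0) + hw u)%nat.
Proof. destruct b; reflexivity. Qed.

Lemma rsum_bvecs_split_weight x y n i : (i <= n)%nat ->
  rsum (fun u => x ^ hw (firstn i u) * y ^ hw (skipn i u)) (bvecs n)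
  = (1 + x) ^ i * (1 + y) ^ (n - i).
Proof.
  pose (F j u := x ^ hw (firstn j u) * y ^ hw (skipn j u)).
  change ((i <= n)%nat -> rsum (F i) (bvecs n) = (1 + x) ^ i * (1 + y) ^ (n - i)).
  revert i; induction n as [|n IH]; intros i Hi.
  - replace i with 0%nat by lia. unfold F; cbn. ring.
  - cbn [bvecs]. rewrite rsum_app, !rsum_map.
    destruct i as [|i].
    + rewrite (rsum_ext (fun u => F 0%nat (false :: u)) (F 0%nat)),
              (rsum_ext (fun u => F 0%nat (true :: u)) (fun u => y * F 0%nat u)), rsum_scal, IH
        by (lia || intro u; unfold F; cbn [firstn skipn]; rewrite ?hw_cons; cbn [Nat.add pow]; ring).
      rewrite !Nat.sub_0_r. cbn [pow]. ring.
    + rewrite (rsum_ext (fun u => F (S i) (false :: u)) (F i)),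
              (rsum_ext (fun u => F (S i) (true :: u)) (fun u => x * F i u)), rsum_scal, IH
        by (lia || intro u; unfold F; cbn [firstn skipn]; rewrite ?hw_cons; cbn [Nat.add pow]; ring).
      cbn [Nat.sub pow]. ring.
Qed.

Lemma pow_opp_parity a n : (- a) ^ n = if Nat.even n then a ^ n else - a ^ n.
Proof.
  induction n as [|n IH]; [reflexivity|].
  cbn [pow]. rewrite IH, Nat.even_succ, <- Nat.negb_even.
  destruct (Nat.even n); cbn; ring.
Qed.

Lemma Zk_pos k a : 0 < a < 1 -> 0 < Zk k a.
Proof.
  intros Ha. unfold Zk.
  assert (0 < (1 + a) ^ k) by (apply pow_lt; lra).
  assert (0 < (1 - a) ^ k) by (apply pow_lt; lra).
  lra.
Qed.

(* With p, q the weights of the first i and the last k - i coordinates, the summand of e_ik is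
   [p + q even, p odd] a^(p+q), which equals (a^p - (-a)^p) (a^q - (-a)^q) / 4. *)
Lemma e_ik_closed k i a : 0 < a < 1 -> (i <= k)%nat ->
  e_ik k i a = ((1 + a) ^ i - (1 - a) ^ i) * ((1 + a) ^ (k - i) - (1 - a) ^ (k - i)) / (4 * Zk k a).
Proof.
  intros Ha Hik. pose proof (Zk_pos k a Ha) as HZ.
  unfold e_ik.
  rewrite (rsum_ext _ (fun u => / (4 * Zk k a) *
     (a ^ hw (firstn i u) * a ^ hw (skipn i u)
      + (-1) * (a ^ hw (firstn i u) * (-a) ^ hw (skipn i u))
      + (-1) * ((-a) ^ hw (firstn i u) * a ^ hw (skipn i u))
      + (-a) ^ hw (firstn i u) * (-a) ^ hw (skipn i u)))).
  2:{ intro u. unfold Pk.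
      replace (hw u) with (hw (firstn i u) + hw (skipn i u))%nat
        by (rewrite <- hw_app, firstn_skipn; reflexivity).
      rewrite Nat.even_add, <- Nat.negb_even,
        !pow_opp_parity, pow_add.
      destruct (Nat.even (hw (firstn i u))), (Nat.even (hw (skipn i u))); cbn; field; lra. }
  rewrite rsum_scal, !rsum_plus, !rsum_scal, !rsum_bvecs_split_weight by lia.
  replace (1 + - a) with (1 - a) by ring. field. lra.
Qed.

Lemma Rle_div_of_mul c N D : 0 < D -> c * D <= N -> c <= N / D.
Proof. intros HD H. apply (Rmult_le_reg_r D); [exact HD|]. unfold Rdiv. rewrite Rmult_assoc, Rinv_l; lra. Qed.

Lemma Rdiv_le_of_mul c N D : 0 < D -> N <= c * D -> N / D <= c.
Proof. intros HD H. apply (Rmult_le_reg_r D); [exact HD|]. unfold Rdiv. rewrite Rmult_assoc, Rinv_l; lra. Qed.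

Lemma pow_sub_pow_lower x y n : 0 <= y <= x -> (x - y) * x ^ n <= x ^ S n - y ^ S n.
Proof.
  intros Hxy. pose proof (pow_incr y x n Hxy) as Hn. cbn [pow].
  assert (0 <= y * (x ^ n - y ^ n)) by (apply Rmult_le_pos; lra).
  lra.
Qed.

Section Bounds.
Variable a : R.
Hypothesis Ha : 0 < a < 1.

Let s := a / (1 + a).

Lemma s_pos : 0 < s.
Proof. unfold s. apply Rdiv_lt_0_compat; lra. Qed.

Lemma pow_one_pm_bounds n : 0 < (1 + a) ^ n /\ 0 < (1 - a) ^ n /\ (1 - a) ^ n <= (1 + a) ^ n.
Proof. split; [apply pow_lt; lra|]. split; [apply pow_lt; lra|]. apply pow_incr; lra. Qed.

(* Since 2a = (1 + a) - (1 - a). *)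
Lemma pow_gap_lower n : 2 * s * (1 + a) ^ S n <= (1 + a) ^ S n - (1 - a) ^ S n.
Proof.
  replace (2 * s * (1 + a) ^ S n) with (((1 + a) - (1 - a)) * (1 + a) ^ n)
    by (unfold s; cbn [pow]; field; lra).
  apply pow_sub_pow_lower; lra.
Qed.

Lemma e_ik_bounds k i : (1 <= i < k)%nat -> s ^ 2 <= e_ik k i a <= 1 / 2.
Proof.
  intros Hik. rewrite e_ik_closed by (lra || lia). unfold Zk.
  destruct i as [|i]; [lia|]. destruct (k - S i)%nat as [|m] eqn:Em; [lia|].
  replace k with (S i + S m)%nat by lia. rewrite !pow_add.
  pose proof (pow_gap_lower i) as Li. pose proof (pow_gap_lower m) as Lm.
  destruct (pow_one_pm_bounds (S i)) as (Ai & Bi & BAi).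
  destruct (pow_one_pm_bounds (S m)) as (Am & Bm & BAm).
  pose proof s_pos as Hs.
  set (Ni := (1 + a) ^ S i - (1 - a) ^ S i) in *.
  set (Nm := (1 + a) ^ S m - (1 - a) ^ S m) in *.
  assert (Hprod : 0 <= (1 - a) ^ S i * (1 - a) ^ S m <= (1 + a) ^ S i * (1 + a) ^ S m).
  { split; [nra|]. apply Rmult_le_compat; lra. }
  split.
  - apply Rle_div_of_mul; [nra|].
    assert (HN : (2 * s * (1 + a) ^ S i) * (2 * s * (1 + a) ^ S m) <= Ni * Nm)
      by (apply Rmult_le_compat; nra).
    nra.
  - apply Rdiv_le_of_mul; [nra|].
    assert (HN : Ni * Nm <= (1 + a) ^ S i * (1 + a) ^ S m)
      by (apply Rmult_le_compat; unfold Ni, Nm; nra).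
    nra.
Qed.

Lemma p01_bounds k i : (i < k)%nat -> s ^ 2 <= p01 k i a <= 1 / 2.
Proof.
  intros Hik. unfold p01. destruct (k - i)%nat as [|m] eqn:Em; [lia|].
  rewrite Nat.add_1_r.
  pose proof (pow_gap_lower m) as Lm.
  destruct (pow_one_pm_bounds (S (S m))) as (A2 & B2 & BA2).
  pose proof s_pos as Hs.
  assert (HA2 : (1 + a) ^ S (S m) = (1 + a) * (1 + a) ^ S m) by reflexivity.
  assert (HB2 : (1 - a) ^ S (S m) = (1 - a) * (1 - a) ^ S m) by reflexivity.
  destruct (pow_one_pm_bounds (S m)) as (Am & Bm & BAm).
  split.
  - apply Rle_div_of_mul; [lra|].
    apply Rle_trans with (a * (2 * s * (1 + a) ^ S m)); [|apply Rmult_le_compat_l; lra].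
    replace (a * (2 * s * (1 + a) ^ S m)) with (2 * s ^ 2 * (1 + a) ^ S (S m))
      by (rewrite HA2; unfold s; field; lra).
    nra.
  - apply Rdiv_le_of_mul; [lra|].
    (* 2a ((1+a)^m - (1-a)^m) <= (1+a)^(m+1) + (1-a)^(m+1), with 2a = (1+a) - (1-a) *)
    nra.
Qed.

Lemma p10_bounds k i : (i < k)%nat -> s <= p10 k i a <= 1 / 2.
Proof.
  intros Hik. unfold p10. destruct (k - i)%nat as [|m] eqn:Em; [lia|].
  rewrite Nat.add_1_r.
  destruct (pow_one_pm_bounds m) as (Am & Bm & BAm).
  pose proof s_pos as Hs.
  assert (HA : (1 + a) ^ S (S m) = (1 + a) * ((1 + a) * (1 + a) ^ m)) by reflexivity.
  assert (HB : (1 - a) ^ S (S m) = (1 - a) * ((1 - a) * (1 - a) ^ m)) by reflexivity.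
  cbn [pow]; rewrite <- HA, <- HB.
  destruct (pow_one_pm_bounds (S (S m))) as (A2 & B2 & _).
  assert (Hgap : (1 - a) ^ S (S m) < (1 + a) ^ S (S m)).
  { rewrite HA, HB. apply Rmult_le_0_lt_compat; [lra|nra|lra|nra]. }
  split.
  - apply Rle_div_of_mul; [lra|].
    apply Rle_trans with (s * (1 + a) ^ S (S m)); [nra|].
    replace (s * (1 + a) ^ S (S m)) with (a * ((1 + a) * (1 + a) ^ m))
      by (rewrite HA; unfold s; field; lra).
    nra.
  - apply Rdiv_le_of_mul; [lra|].
    (* with 2a = (1+a) - (1-a), this reduces to (1-a)^m <= (1+a)^m *)
    assert (0 <= (1 - a) * (1 + a) * ((1 + a) ^ m - (1 - a) ^ m)) by (apply Rmult_le_pos; nra).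
    nra.
Qed.

End Bounds.

Lemma is_alpha_gamma_le k gamma a : (1 <= k)%nat -> is_alpha k gamma a -> gamma <= a / (1 + a).
Proof.
  intros Hk [Ha <-]. destruct k as [|k]; [lia|].
  replace (S k - 1)%nat with k by lia. cbn [pow].
  destruct (pow_one_pm_bounds a Ha k) as (Ak & Bk & BAk).
  set (D := (1 + a) * (1 + a) ^ k + (1 - a) * (1 - a) ^ k).
  apply Rdiv_le_of_mul; [unfold D; nra|].
  apply (Rmult_le_reg_r (1 + a)); [lra|].
  replace (a / (1 + a) * D * (1 + a)) with (a * D) by (field; lra).
  unfold D. nra.
Qed.

Theorem mainTheorem13 :
  forall gamma : R, 0 < gamma < 1 / 2 ->
  exists c : R, 0 < c /\
    forall (k i : nat) (alpha : R),
      (3 <= k)%nat -> (1 <= i <= k - 1)%nat ->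
      is_alpha k gamma alpha ->
      in_c c (e_ik k i alpha) /\ in_c c (p01 k i alpha) /\ in_c c (p10 k i alpha).
Proof.
  intros gamma Hg. exists (gamma ^ 2). split; [nra|].
  intros k i a Hk Hi Hal.
  pose proof (is_alpha_gamma_le k gamma a ltac:(lia) Hal) as Hgs.
  destruct Hal as [Ha _].
  assert (Hsq : gamma ^ 2 <= (a / (1 + a)) ^ 2) by (apply pow_incr; lra).
  assert (gamma ^ 2 <= gamma) by nra.
  destruct (e_ik_bounds a Ha k i ltac:(lia)).
  destruct (p01_bounds a Ha k i ltac:(lia)).
  destruct (p10_bounds a Ha k i ltac:(lia)).
  unfold in_c. lra.
Qed.
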